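(* Let $n=n(\theta)$ be positive integers with $n\to\infty$ and $\theta/n\to0$ as $\theta\to\infty$. Let $K_n(\theta)$ be a random variable with $P\{K_n(\theta)=k\}=|S_n^k|\theta^k/\theta_{(n)}$, $k=1,\dots,n$, where $\theta_{(n)}=\theta(\theta+1)\cdots(\theta+n-1)$ and $|S_n^k|$ is the coefficient of $\theta^k$ in $\theta_{(n)}$. Then, as $\theta\to\infty$, the family of laws of $K_n(\theta)/(\theta\log\frac n\theta)$ satisfies an LDP on $[0,+\infty)$ with speed $\theta\log\frac n\theta$ and rate function $I(x)=x\log x-x+1$ (with $0\log0=0$).
   Context: $K_n(\theta)$ is the number of distinct alleles in a sample of size $n$ from a $PD(\theta)$ population. An LDP with speed $a(\theta)$ uses normalization $a(\theta)^{-1}\log$ as $\theta\to\infty$. *)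

From HB Require Import structures.
From mathcomp Require Import all_boot all_order all_algebra.
From mathcomp Require Import all_classical all_reals all_analysis.
Set Implicit Arguments. Unset Strict Implicit. Unset Printing Implicit Defensive.
Import Order.TTheory GRing.Theory Num.Theory.
Import numFieldNormedType.Exports.
Local Open Scope classical_set_scope.
Local Open Scope ring_scope.

Definition rising_poly (R : realType) (n : nat) : {poly R} :=
  \prod_(i < n) ('X + (i%:R)%:P).

Definition rising (R : realType) (theta : R) (n : nat) : R :=
  \prod_(i < n) (theta + i%:R).

Definition stirling1 (R : realType) (n k : nat) : R := (rising_poly R n)`_k.

Definition probK (R : realType) (theta : R) (n k : nat) : R :=
  stirling1 R n k * theta ^+ k / rising theta n.

Definition law_scaledK (R : realType) (theta s : R) (n : nat) (A : set R) : R :=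
  \sum_(1 <= k < n.+1) probK theta n k * \1_A (k%:R / s).

Definition rateI (R : realType) (x : R) : R :=
  (if x == 0 then 0 else x * ln x) - x + 1.

(* Large deviation principle on the state space [0, +oo) (a closed subset of R)
   for a family of laws mu t (probability measures given as set functions),
   t -> +oo, with speed a t and rate function I defined on [0,+oo).
   Closed (resp. open) subsets of [0,+oo) are exactly F `&` [0,+oo) with F
   closed (resp. open) in R; since the laws are supported in [0,+oo),
   mu t (F `&` [0,+oo)) = mu t F.  The usual bounds
     limsup_t (1/a t) log mu t F <= - inf_{F `&` [0,oo)} I,
     liminf_t (1/a t) log mu t G >= - inf_{G `&` [0,oo)} I
   are written in their elementary epsilon form (which also handles
   log 0 = -oo and inf over the empty set = +oo).  We also require I to be a
   rate function: nonnegative with closed sublevel sets. *)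
Definition LDP_on_nonneg (R : realType) (mu : R -> set R -> R) (a : R -> R)
    (I : R -> R) : Prop :=
  [/\ (forall x : R, 0 <= x -> 0 <= I x),
      (forall c : R, closed [set x : R | 0 <= x /\ I x <= c]),
      (forall (F : set R), closed F ->
         forall M : R, (forall x, F x -> 0 <= x -> M <= I x) ->
         forall eps : R, 0 < eps ->
         \forall t \near +oo%R, mu t F <= expR (a t * (eps - M))) &
      (forall (G : set R), open G ->
         forall x : R, G x -> 0 <= x ->
         forall eps : R, 0 < eps ->
         \forall t \near +oo%R, expR (- (a t * (I x + eps))) <= mu t G)].

From HB Require Import structures.
From mathcomp Require Import all_boot all_order all_algebra.
From mathcomp Require Import all_classical all_reals all_analysis.
From mathcomp Require Import ring lra.
Import Order.TTheory GRing.Theory Num.Theory.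
Import numFieldNormedType.Exports.
Local Open Scope classical_set_scope.
Local Open Scope ring_scope.

(* The generating function of K = K_n(theta) is the product
     E[z ^ K] = (theta z)_(n) / theta_(n) = prod_(i < n) (theta z + i) / (theta + i),
   and comparing each factor with an exponential gives
     exp (theta (z - 1) H(theta z)) <= E[z ^ K] <= exp (theta (z - 1) H(theta))
   with H(c) = sum_(i < n) 1 / (c + i) = log (n / theta) + O(1).  Hence, on the scale
   a = theta log (n / theta), K behaves like a Poisson variable of mean a: Chernoff
   bounds with z = y give the upper bounds with rate y log y - y + 1, and tilting the
   law by z = x, which concentrates K / a near x, gives the matching lower bound. *)

Section ElementaryInequalities.
Context {R : realType}.

Lemma div_le_expR (a b : R) : 0 < a -> 0 <= b -> b / a <= expR ((b - a) / a).
Proof.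
move=> a0 b0; apply: le_trans (expR_ge1Dx _).
by rewrite mulrBl divff ?gt_eqF // addrC subrK.
Qed.

Lemma ln_le_subr1 (y : R) : 0 < y -> ln y <= y - 1.
Proof. by move=> y0; have := @le_ln1Dx R (y - 1); rewrite addrCA subrr addr0; apply; lra. Qed.

Lemma ln1Dx_ge_div (q : R) : 0 < q -> q / (1 + q) <= ln (1 + q).
Proof.
move=> q0; have q1 : 0 < 1 + q by lra.
have qV : 0 < (1 + q)^-1 by rewrite invr_gt0.
have := ln_le_subr1 _ qV; rewrite lnV ?posrE // => h.
have -> : q / (1 + q) = - ((1 + q)^-1 - 1) by field; rewrite gt_eqF.
lra.
Qed.

Lemma ln_succ_sub_le (y : R) : 0 < y -> ln (y + 1) - ln y <= y^-1.
Proof.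
move=> y0; have yV : 0 < y^-1 by rewrite invr_gt0.
rewrite -ln_div ?posrE ?addr_gt0 // mulrDl divff ?gt_eqF // mul1r.
by apply: le_ln1Dx; lra.
Qed.

Lemma inv_succ_le_ln_sub (y : R) : 0 < y -> (y + 1)^-1 <= ln (y + 1) - ln y.
Proof.
move=> y0; have y1 : 0 < y + 1 by lra.
have yV : 0 < (y + 1)^-1 by rewrite invr_gt0.
rewrite -opprB -ln_div ?posrE // lerNr.
have -> : y / (y + 1) = 1 + - (y + 1)^-1 by field; rewrite gt_eqF.
by apply: le_ln1Dx; rewrite ltrN2 invf_lt1 //; lra.
Qed.

Lemma expR1_ge2 : 2 <= expR (1 : R).
Proof. by have := @expR_ge1Dx R 1; lra. Qed.

Lemma expR2_ge4 : 4 <= expR (2 : R).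
Proof.
have -> : (2 : R) = 1 + 1 by [].
rewrite expRD; have -> : (4 : R) = 2 * 2 by rewrite -natrM.
by apply: ler_pM => //; exact: expR1_ge2.
Qed.

Lemma mulr_le_normM (a h D : R) : `|h| <= D -> a * h <= `|a| * D.
Proof. by move=> hD; apply: le_trans (ler_norm _) _; rewrite normrM ler_wpM2l. Qed.

End ElementaryInequalities.

Section Indicator.
Context {T : Type} {R : realType}.
Implicit Types (A : set T) (u : T).

Lemma indic_ge0 A u : 0 <= \1_A u :> R.
Proof. by rewrite indicE ler0n. Qed.

Lemma indic_le1 A u : \1_A u <= 1 :> R.
Proof. by rewrite indicE; case: (u \in A); rewrite ?ler01. Qed.

Lemma indic_mem A u : A u -> \1_A u = 1 :> R.
Proof. by move=> Au; rewrite indicE mem_set. Qed.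

Lemma indic_nmem A u : ~ A u -> \1_A u = 0 :> R.
Proof. by move=> Au; rewrite indicE memNset. Qed.

End Indicator.

Section ClosedExtrema.
Context {R : realType}.

Lemma closed_sup_mem (A : set R) : closed A -> A !=set0 -> has_ubound A -> A (sup A).
Proof. by move=> cA A0 ubA; apply: cA; exact: closure_sup. Qed.

Lemma closed_inf_mem (A : set R) : closed A -> A !=set0 -> has_lbound A -> A (inf A).
Proof.
move=> cA [a Aa] lbA.
have [||b Ab eb] := closed_sup_mem _ (closedN cA).
- by exists (- a), a.
- exact/has_lb_ubN.
by rewrite /inf -eb opprK.
Qed.

End ClosedExtrema.

Section GeneratingFunction.
Context {R : realType}.

Lemma rising_polyS n : rising_poly R n.+1 = rising_poly R n * ('X + n%:R%:P).
Proof. by rewrite /rising_poly big_ord_recr. Qed.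

Lemma size_rising_poly n : (size (rising_poly R n) <= n.+1)%N.
Proof.
elim: n => [|n IH]; first by rewrite /rising_poly big_ord0 size_poly1.
rewrite rising_polyS; apply: leq_trans (size_mul_leq _ _) _.
by rewrite size_XaddC addn2.
Qed.

Lemma horner_rising_poly n (y : R) : (rising_poly R n).[y] = rising y n.
Proof.
by rewrite /rising_poly horner_prod; apply: eq_bigr => i _; rewrite hornerD hornerX hornerC.
Qed.

Lemma stirling1_n0 n : (0 < n)%N -> stirling1 R n 0 = 0.
Proof.
case: n => // n _; rewrite /stirling1; elim: n => [|n IH].
  by rewrite rising_polyS /rising_poly big_ord0 mul1r coefD coefX coefC add0r.
by rewrite rising_polyS coef0M IH mul0r.
Qed.

Lemma stirling1_ge0 n k : 0 <= stirling1 R n k.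
Proof.
rewrite /stirling1; elim: n k => [|n IH] k.
  by rewrite /rising_poly big_ord0 coef1; case: (k == 0%N).
rewrite rising_polyS mulrDr coefD coefMX coefMC.
by apply: addr_ge0; [case: (k == 0%N)|apply: mulr_ge0].
Qed.

Lemma rising_stirling1 (y : R) n : (0 < n)%N ->
  rising y n = \sum_(1 <= k < n.+1) stirling1 R n k * y ^+ k.
Proof.
move=> n0; rewrite -horner_rising_poly (horner_coef_wide _ (size_rising_poly n)).
rewrite big_ord_recl /= -/(stirling1 R n 0) stirling1_n0 // mul0r add0r.
by rewrite big_add1 /= big_mkord.
Qed.

Lemma rising_gt0 (c : R) n : 0 < c -> 0 < rising c n.
Proof. by move=> c0; apply: prodr_gt0 => i _; apply: ltr_wpDr. Qed.

Lemma probK_ge0 (t : R) n k : 0 < t -> 0 <= probK t n k.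
Proof.
move=> t0; apply: divr_ge0; last exact/ltW/rising_gt0.
by apply: mulr_ge0; [exact: stirling1_ge0|apply/exprn_ge0/ltW].
Qed.

Lemma sum_probK_exprn (t z : R) n : (0 < n)%N ->
  \sum_(1 <= k < n.+1) probK t n k * z ^+ k = rising (t * z) n / rising t n.
Proof.
move=> n0; rewrite (rising_stirling1 _ _ n0) mulr_suml; apply: eq_bigr => k _.
by rewrite /probK exprMn; ring.
Qed.

End GeneratingFunction.

Section RisingRatio.
Context {R : realType}.

Definition harm (c : R) n := \sum_(i < n) (c + i%:R)^-1.

(* The ratio is the product of the [(u + i) / (t + i)], each at most [exp((u - t) / (t + i))]. *)
Lemma rising_ratio_le (t u : R) n : 0 < t -> 0 < u ->
  rising u n / rising t n <= expR ((u - t) * harm t n).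
Proof.
move=> t0 u0; rewrite -prodf_div mulr_sumr expR_sum; apply: ler_prod => i _.
have ti : 0 < t + i%:R by apply: ltr_wpDr.
have ui : 0 <= u + i%:R by apply/ltW/ltr_wpDr.
rewrite divr_ge0 ?(ltW ti) //=.
by have := div_le_expR _ _ ti ui; rewrite opprD addrACA subrr addr0.
Qed.

Lemma rising_ratio_ge (t u : R) n : 0 < t -> 0 < u ->
  expR ((u - t) * harm u n) <= rising u n / rising t n.
Proof.
move=> t0 u0; have := rising_ratio_le u t n u0 t0.
rewrite -[t - u]opprB mulNr expRN -[rising u n / _]invf_div.
rewrite -[X in X <= _ -> _]invrK lef_pV2 // posrE ?invr_gt0 ?expR_gt0 //.
by rewrite divr_gt0 ?rising_gt0.
Qed.

End RisingRatio.

Section HarmonicBounds.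
Context {R : realType}.

Lemma ln_le_harm (c : R) n : 0 < c -> ln (c + n%:R) - ln c <= harm c n.
Proof.
move=> c0; have := telescope_sumr (fun k => ln (c + k%:R)) (leq0n n).
rewrite addr0 => <-; rewrite big_mkord; apply: ler_sum => k _.
by rewrite -natr1 addrA ln_succ_sub_le // ltr_wpDr.
Qed.

Lemma harm_le_ln (c : R) n : 0 < c -> harm c n <= c^-1 + (ln (c + n%:R) - ln c).
Proof.
move=> c0; case: n => [|m].
  by rewrite /harm big_ord0 addr0 subrr addr0 invr_ge0 ltW.
rewrite /harm big_ord_recl addr0 lerD2l.
have := telescope_sumr (fun k => ln (c + k%:R)) (leq0n m); rewrite addr0 => tel.
apply: (@le_trans _ _ (ln (c + m%:R) - ln c)).
  rewrite -tel big_mkord; apply: ler_sum => k _.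
  by rewrite lift0 -natr1 addrA inv_succ_le_ln_sub // ltr_wpDr.
by rewrite lerD2r ler_ln ?posrE ?ltr_wpDr // lerD2l ler_nat.
Qed.

Lemma ln_ratio_sub_le_harm (t x : R) n : 1 <= t -> t <= n%:R -> 0 < x ->
  ln (n%:R / t) - `|ln x| <= harm (t * x) n.
Proof.
move=> t1 tn x0; have t0 : 0 < t by lra.
have tx0 : 0 < t * x by apply: mulr_gt0.
have n0 : 0 < n%:R :> R by lra.
apply: le_trans (ln_le_harm _ _ tx0); rewrite ln_div ?posrE // lnM ?posrE //.
have : ln n%:R <= ln (t * x + n%:R) by rewrite ler_ln ?posrE ?addr_gt0 // lerDr ltW.
have := ler_norm (ln x); lra.
Qed.

Lemma harm_le_ln_ratio (t x : R) n : 1 <= t -> t <= n%:R -> 0 < x ->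
  harm (t * x) n <= ln (n%:R / t) + 2 / x.
Proof.
move=> t1 tn x0; have t0 : 0 < t by lra.
have tx0 : 0 < t * x by apply: mulr_gt0.
have n0 : 0 < n%:R :> R by lra.
have xV : 0 < x^-1 by rewrite invr_gt0.
apply: le_trans (harm_le_ln _ _ tx0) _.
have -> : ln (t * x + n%:R) - ln (t * x) = ln (n%:R / t) + ln (t / n%:R + x^-1).
  rewrite -ln_div ?posrE ?addr_gt0 // -lnM ?posrE ?divr_gt0 ?addr_gt0 ?divr_gt0 //.
  by congr ln; field; rewrite !gt_eqF.
have h1 : (t * x)^-1 <= x^-1.
  by rewrite lef_pV2 ?posrE // -[X in X <= _]mul1r ler_wpM2r // ltW.
have h2 : ln (t / n%:R + x^-1) <= x^-1.
  apply: le_trans (ln_le_subr1 _ (addr_gt0 (divr_gt0 t0 n0) xV)) _.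
  have : t / n%:R <= 1 by rewrite ler_pdivrMr // mul1r.
  lra.
lra.
Qed.

Lemma harm_sub_ln_ratio (t x : R) n : 1 <= t -> t <= n%:R -> 0 < x ->
  `|harm (t * x) n - ln (n%:R / t)| <= `|ln x| + 2 / x.
Proof.
move=> t1 tn x0; have := ln_ratio_sub_le_harm _ _ _ t1 tn x0.
have := harm_le_ln_ratio _ _ _ t1 tn x0; have : 0 <= 2 / x by rewrite divr_ge0 ?ltW.
rewrite ler_norml => ? ? ?; have ? := normr_ge0 (ln x); apply/andP; split; lra.
Qed.

End HarmonicBounds.

Section TiltedLaw.
Context {R : realType}.
Implicit Types (t s x z y : R) (A B C : set R).

(* The unnormalised exponential tilt by [x ^ K_n(t)] of the law of [K_n(t) / s]. *)
Definition tilted_law t s x n A :=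
  \sum_(1 <= k < n.+1) probK t n k * x ^+ k * \1_A (k%:R / s).

Lemma law_scaledKE t s n A : law_scaledK t s n A = tilted_law t s 1 n A.
Proof. by apply: eq_bigr => k _; rewrite expr1n mulr1. Qed.

Lemma law_le1 t s n A : (0 < n)%N -> 0 < t -> law_scaledK t s n A <= 1.
Proof.
move=> n0 t0; rewrite law_scaledKE.
apply: (@le_trans _ _ (\sum_(1 <= k < n.+1) probK t n k * 1 ^+ k)).
  rewrite /tilted_law !big_nat; apply: ler_sum => k _.
  by rewrite ler_piMr ?indic_le1 // expr1n mulr1 probK_ge0.
by rewrite sum_probK_exprn // mulr1 divff // gt_eqF // rising_gt0.
Qed.

Lemma law_le_cover t s n A B C : 0 < t -> 0 < s ->
  (forall u, 0 < u -> A u -> B u \/ C u) ->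
  law_scaledK t s n A <= law_scaledK t s n B + law_scaledK t s n C.
Proof.
move=> t0 s0 ABC; rewrite /law_scaledK -big_split !big_nat.
apply: ler_sum => k /andP[k1 _] /=; rewrite -mulrDr ler_wpM2l ?probK_ge0 //.
set u := k%:R / s; have u0 : 0 < u by rewrite divr_gt0 ?ltr0n.
have B0 := @indic_ge0 _ R B u; have C0 := @indic_ge0 _ R C u.
case: (pselect (A u)) => Au; last by rewrite indic_nmem // addr_ge0.
rewrite (indic_mem _ _ Au); case: (ABC _ u0 Au) => [Bu|Cu].
- by rewrite (indic_mem _ _ Bu); lra.
- by rewrite (indic_mem _ _ Cu); lra.
Qed.

Lemma law_eq0 t s n A : 0 < s -> (forall u, 0 < u -> ~ A u) -> law_scaledK t s n A = 0.
Proof.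
move=> s0 A0; rewrite /law_scaledK big_nat big1 // => k /andP[k1 _].
by rewrite indic_nmem ?mulr0 //; apply/A0/divr_gt0; rewrite ?ltr0n.
Qed.

(* Chernoff: on [A], [z ^ (k - y s) >= 1]. *)
Lemma tilted_law_le_chernoff t s x z y n A :
  (0 < n)%N -> 0 < t -> 0 < s -> 0 < x -> 0 < z ->
  (forall u, A u -> 0 <= ln z * (u - y)) ->
  tilted_law t s x n A <= expR (- (ln z * y * s)) * (rising (t * (x * z)) n / rising t n).
Proof.
move=> n0 t0 s0 x0 z0 hA.
rewrite /tilted_law -sum_probK_exprn // mulr_sumr !big_nat.
apply: ler_sum => k _.
have xk : 0 <= probK t n k * x ^+ k by rewrite mulr_ge0 ?probK_ge0 ?exprn_ge0 ?ltW.
rewrite [X in _ <= X](_ : _ = probK t n k * x ^+ k * (z ^+ k * expR (- (ln z * y * s))));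
  last by rewrite exprMn; ring.
rewrite ler_wpM2l //.
case: (pselect (A (k%:R / s))) => [Ak|Ak]; last first.
  by rewrite indic_nmem // mulr_ge0 ?exprn_ge0 ?ltW ?expR_gt0.
rewrite indic_mem // -[z in z ^+ k]lnK ?posrE // -expRM_natr -expRD.
rewrite -[X in X <= _]expR0 ler_expR.
have := hA _ Ak; rewrite -(pmulr_rge0 _ s0) => h.
have -> : ln z * k%:R = s * (ln z * (k%:R / s - y)) + ln z * y * s.
  by field; rewrite gt_eqF.
lra.
Qed.

Lemma tilted_law_le_expR t s x z y n A :
  (0 < n)%N -> 0 < t -> 0 < s -> 0 < x -> 0 < z ->
  (forall u, A u -> 0 <= ln z * (u - y)) ->
  tilted_law t s x n A <= expR (- (ln z * y * s) + t * (x * z - 1) * harm t n).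
Proof.
move=> n0 t0 s0 x0 z0 hA.
apply: le_trans (tilted_law_le_chernoff t s x z y n A n0 t0 s0 x0 z0 hA) _.
rewrite expRD ler_wpM2l ?expR_ge0 //.
have -> : t * (x * z - 1) = t * (x * z) - t by ring.
by apply: rising_ratio_le; rewrite ?mulr_gt0.
Qed.

End TiltedLaw.

Section Tails.
Context {R : realType}.
Implicit Types (t y : R) (A : set R).

Lemma law_le_rate_tail t y n A : (0 < n)%N -> 1 <= t -> 0 < ln (n%:R / t) -> 0 < y ->
  (forall u, A u -> 0 <= ln y * (u - y)) ->
  law_scaledK t (t * ln (n%:R / t)) n A
    <= expR (- (t * ln (n%:R / t) * rateI y) + t * (y - 1) * (harm t n - ln (n%:R / t))).
Proof.
move=> n0 t1 L0 y0 hA; have t0 : 0 < t by lra.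
rewrite law_scaledKE; apply: le_trans (tilted_law_le_expR _ _ _ _ _ _ _ n0 t0 _ ltr01 y0 hA) _.
  exact: mulr_gt0.
by rewrite ler_expR /rateI gt_eqF // mul1r le_eqVlt; apply/orP; left; apply/eqP; ring.
Qed.

Lemma law_le_lower_tail t y n A : (0 < n)%N -> 1 <= t -> t <= n%:R ->
  0 < ln (n%:R / t) -> 0 < y < 1 -> (forall u, A u -> u <= y) ->
  law_scaledK t (t * ln (n%:R / t)) n A <= expR (- (t * ln (n%:R / t) * rateI y)).
Proof.
move=> n0 t1 tn L0 /andP[y0 y1] hA.
have ly : ln y < 0 by rewrite ln_lt0 // y0.
apply: le_trans (law_le_rate_tail _ _ _ _ n0 t1 L0 y0 _) _.
  by move=> u /hA uy; rewrite mulr_le0 ?subr_le0 // ltW.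
have := ln_ratio_sub_le_harm _ _ _ t1 tn ltr01; rewrite ln1 normr0 subr0 mulr1 => hL.
rewrite ler_expR gerDl; apply: mulr_le0_ge0; last by rewrite subr_ge0.
by rewrite pmulr_rle0 ?subr_le0 ?ltW //; lra.
Qed.

Lemma law_le_upper_tail t y n A : (0 < n)%N -> 1 <= t -> t <= n%:R ->
  0 < ln (n%:R / t) -> 1 < y -> (forall u, A u -> y <= u) ->
  law_scaledK t (t * ln (n%:R / t)) n A
    <= expR (- (t * ln (n%:R / t) * rateI y) + 2 * t * (y - 1)).
Proof.
move=> n0 t1 tn L0 y1 hA; have y0 : 0 < y by lra.
have ly : 0 < ln y by rewrite ln_gt0.
apply: le_trans (law_le_rate_tail _ _ _ _ n0 t1 L0 y0 _) _.
  by move=> u /hA yu; rewrite mulr_ge0 ?subr_ge0 // ltW.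
have := harm_le_ln_ratio _ _ _ t1 tn ltr01; rewrite mulr1 divr1 => hL.
rewrite ler_expR lerD2l.
have -> : 2 * t * (y - 1) = t * (y - 1) * 2 by ring.
by rewrite ler_wpM2l ?mulr_ge0 //; lra.
Qed.

End Tails.

Section WindowLowerBound.
Context {R : realType}.
Implicit Types (t s x q z y c : R) (A G : set R).

Lemma rising_ratio_le_tilted_cover t s x n (W U D : set R) :
  (0 < n)%N -> 0 < t -> 0 < x -> (forall u, W u \/ U u \/ D u) ->
  rising (t * x) n / rising t n
    <= tilted_law t s x n W + tilted_law t s x n U + tilted_law t s x n D.
Proof.
move=> n0 t0 x0 WUD; rewrite -sum_probK_exprn // /tilted_law -!big_split !big_nat.
apply: ler_sum => k _ /=; rewrite -!mulrDr -[X in X <= _]mulr1.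
apply: ler_wpM2l; first by apply: mulr_ge0; [exact: probK_ge0|exact/exprn_ge0/ltW].
set u := k%:R / s.
have := @indic_ge0 _ R W u; have := @indic_ge0 _ R U u; have := @indic_ge0 _ R D u.
by case: (WUD u) => [Wu|[Uu|Du]];
  [rewrite (indic_mem _ _ Wu)|rewrite (indic_mem _ _ Uu)|rewrite (indic_mem _ _ Du)]; lra.
Qed.

(* On the window [K/s] is within [d] of [x], so [x ^ K <= exp(s (x ln x + d |ln x|))]. *)
Lemma law_ge_tilted_window t s x d n G : 0 < t -> 0 < s -> 0 < x ->
  [set u | x - d < u < x + d] `<=` G ->
  expR (- (s * (x * ln x + d * `|ln x|))) * tilted_law t s x n [set u | x - d < u < x + d]
    <= law_scaledK t s n G.
Proof.
move=> t0 s0 x0 WG; rewrite /tilted_law /law_scaledK mulr_sumr !big_nat.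
apply: ler_sum => k _; have p0 := probK_ge0 t n k t0.
case: (pselect (x - d < k%:R / s < x + d)) => [/[dup] Wk /andP[k1 k2]|Wk]; last first.
  by rewrite indic_nmem // !mulr0 mulr_ge0 ?indic_ge0.
rewrite !indic_mem //; last exact: WG.
rewrite !mulr1 mulrCA ler_piMr // expRN ler_pdivrMl ?expR_gt0 // mulr1.
rewrite -[x in x ^+ k]lnK ?posrE // -expRM_natr ler_expR.
have -> : ln x * k%:R = s * (x * ln x) + s * ((k%:R / s - x) * ln x).
  by field; rewrite gt_eqF.
rewrite mulrDr lerD2l; apply: ler_wpM2l; first exact: ltW.
apply: le_trans (ler_norm _) _; rewrite normrM ler_wpM2r //.
by rewrite ler_norml; apply/andP; split; lra.
Qed.

Lemma tilt_gap_upper x q : 0 < x -> 0 < q ->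
  x * (1 + q) - x - ln (1 + q) * (x + 2 * x * q) <= - (x * q ^+ 2 / (1 + q)).
Proof.
move=> x0 q0; have q1 : 0 < 1 + q by lra.
have : q / (1 + q) * (x + 2 * x * q) <= ln (1 + q) * (x + 2 * x * q).
  by rewrite ler_wpM2r ?ln1Dx_ge_div //; nra.
have : - (x * q ^+ 2 / (1 + q)) = x * (1 + q) - x - q / (1 + q) * (x + 2 * x * q).
  by field; rewrite gt_eqF.
lra.
Qed.

Lemma tilt_gap_lower x q : 0 < x -> 0 < q -> q <= 2^-1 ->
  x / (1 + q) - x + ln (1 + q) * (x - 2 * x * q) <= - (x * q ^+ 2 / (1 + q)).
Proof.
move=> x0 q0 q2; have q1 : 0 < 1 + q by lra.
have : ln (1 + q) * (x - 2 * x * q) <= q * (x - 2 * x * q).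
  by rewrite ler_wpM2r; [|nra|apply: le_ln1Dx; lra].
have : 0 < 2 * x * q ^+ 3 / (1 + q) by rewrite divr_gt0 // !mulr_gt0 // exprn_gt0.
have : x / (1 + q) - x + q * (x - 2 * x * q) = - (x * q ^+ 2 / (1 + q)) - 2 * x * q ^+ 3 / (1 + q).
  by field; rewrite gt_eqF.
lra.
Qed.

Lemma tail_exponent_le (t L g c a b H1 Hx Dx : R) :
  1 <= t -> 0 <= L -> g <= - c -> `|H1 - L| <= 2 -> `|Hx - L| <= Dx ->
  2 * `|a| + `|b| * Dx + 2 <= c * L ->
  t * L * g + t * a * (H1 - L) - t * b * (Hx - L) <= -2.
Proof.
move=> t1 L0 gc hH1 hHx hL.
have h1 := mulr_le_normM a _ _ hH1; have h2 := mulr_le_normM (- b) _ _ hHx.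
rewrite normrN mulNr in h2.
have h3 : L * g <= - (c * L) by rewrite mulrC -mulNr ler_wpM2r.
have : L * g + a * (H1 - L) - b * (Hx - L) <= -2 by rewrite [2 * `|a|]mulrC in hL; lra.
have -> : t * L * g + t * a * (H1 - L) - t * b * (Hx - L)
  = t * (L * g + a * (H1 - L) - b * (Hx - L)) by ring.
nra.
Qed.

Lemma tilted_tail_le_quarter t x z y c n A :
  (0 < n)%N -> 1 <= t -> t <= n%:R -> 0 < ln (n%:R / t) -> 0 < x -> 0 < z ->
  (forall u, A u -> 0 <= ln z * (u - y)) ->
  x * z - x - ln z * y <= - c ->
  2 * `|x * z - 1| + `|x - 1| * (`|ln x| + 2 / x) + 2 <= c * ln (n%:R / t) ->
  tilted_law t (t * ln (n%:R / t)) x n A <= rising (t * x) n / rising t n / 4.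
Proof.
set L := ln (n%:R / t) => n0 t1 tn L0 x0 z0 hA gap hL.
have t0 : 0 < t by lra.
apply: le_trans (tilted_law_le_expR _ _ _ _ _ _ _ n0 t0 (mulr_gt0 t0 L0) x0 z0 hA) _.
have hT := rising_ratio_ge t (t * x) n t0 (mulr_gt0 t0 x0).
have hH1 := harm_sub_ln_ratio _ _ _ t1 tn ltr01.
rewrite mulr1 ln1 normr0 add0r divr1 in hH1.
have hHx := harm_sub_ln_ratio _ _ _ t1 tn x0.
have := tail_exponent_le t L _ c (x * z - 1) (x - 1) _ _ _ t1 (ltW L0) gap hH1 hHx hL.
set H1 := harm t n; set Hx := harm (t * x) n => key.
have -> : - (ln z * y * (t * L)) + t * (x * z - 1) * H1 =
  (t * x - t) * Hx + (t * L * (x * z - x - ln z * y) + t * (x * z - 1) * (H1 - L)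
                       - t * (x - 1) * (Hx - L)) by ring.
apply: le_trans (_ : expR ((t * x - t) * Hx - 2) <= _); first by rewrite ler_expR lerD2l.
rewrite expRD; apply: ler_pM => //; try exact: expR_ge0.
by rewrite expRN lef_pV2 ?posrE ?expR_gt0 // expR2_ge4.
Qed.

(* Exponential tilting by [x ^ K]: the tilted law concentrates on the window around [x]. *)
Lemma law_ge_window (t x q eps : R) n G :
  (0 < n)%N -> 1 <= t -> t <= n%:R -> 0 < ln (n%:R / t) -> 0 < x -> 0 < q -> q <= 2^-1 ->
  [set u | x - 2 * x * q < u < x + 2 * x * q] `<=` G ->
  2 * x * q * `|ln x| <= eps / 2 ->
  2 * `|x * (1 + q) - 1| + `|x - 1| * (`|ln x| + 2 / x) + 2
    <= x * q ^+ 2 / (1 + q) * ln (n%:R / t) ->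
  2 * `|x * (1 + q)^-1 - 1| + `|x - 1| * (`|ln x| + 2 / x) + 2
    <= x * q ^+ 2 / (1 + q) * ln (n%:R / t) ->
  `|x - 1| * (`|ln x| + 2 / x) + 1 <= ln (n%:R / t) * (eps / 2) ->
  expR (- (t * ln (n%:R / t) * (rateI x + eps))) <= law_scaledK t (t * ln (n%:R / t)) n G.
Proof.
set L := ln (n%:R / t); set d := 2 * x * q; set c := x * q ^+ 2 / (1 + q).
move=> n0 t1 tn L0 x0 q0 q2 WG hd hLU hLD hLe.
have t0 : 0 < t by lra.
have s0 : 0 < t * L by apply: mulr_gt0.
have q1 : 0 < 1 + q by lra.
have lnq : 0 <= ln (1 + q) by rewrite ln_ge0 // lerDl ltW.
set W := [set u | x - d < u < x + d].
set U := [set u | x + d <= u].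
set D := [set u | u <= x - d].
set T := rising (t * x) n / rising t n.
have hU : tilted_law t (t * L) x n U <= T / 4.
  apply: (tilted_tail_le_quarter t x _ (x + d) c n U n0 t1 tn L0 x0 q1 _
           (tilt_gap_upper _ _ x0 q0) hLU).
  by move=> u; rewrite /U /= -subr_ge0 => ?; rewrite mulr_ge0.
have hD : tilted_law t (t * L) x n D <= T / 4.
  have qV : 0 < (1 + q)^-1 by rewrite invr_gt0.
  apply: (tilted_tail_le_quarter t x _ (x - d) c n D n0 t1 tn L0 x0 qV _ _ hLD).
    move=> u; rewrite /D /= lnV ?posrE // -subr_le0 => ?.
    by rewrite mulNr oppr_ge0 mulr_ge0_le0.
  by rewrite lnV ?posrE // mulNr opprK; exact: tilt_gap_lower.
have hW : T / 2 <= tilted_law t (t * L) x n W.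
  have := rising_ratio_le_tilted_cover t (t * L) x n W U D n0 t0 x0.
  have : forall u, W u \/ U u \/ D u.
    move=> u; rewrite /W /U /D /=.
    case: (lerP (x + d) u) => ?; first by right; left.
    by case: (lerP u (x - d)) => ?; [right; right|left; apply/andP; split].
  by move=> /[swap] /[apply]; rewrite -/T; lra.
have hT := rising_ratio_ge t (t * x) n t0 (mulr_gt0 t0 x0).
have hHx := mulr_le_normM (- (t * x - t)) _ _ (harm_sub_ln_ratio _ _ _ t1 tn x0).
have etx : t * x - t = t * (x - 1) by ring.
rewrite normrN etx normrM gtr0_norm // mulNr in hHx.
apply: le_trans (law_ge_tilted_window t (t * L) x d n G t0 s0 x0 WG).
apply: le_trans (ler_wpM2l (expR_ge0 _) hW).
rewrite etx in hT; set Hx := harm (t * x) n in hT hHx.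
have hT2 : expR (-1) * expR (t * (x - 1) * Hx) <= T / 2.
  rewrite mulrC; apply: ler_pM => //; try exact: expR_ge0.
  by rewrite expRN lef_pV2 ?posrE ?expR_gt0 // expR1_ge2.
apply: le_trans (ler_wpM2l (expR_ge0 _) hT2); rewrite -!expRD ler_expR /rateI gt_eqF //=.
have f1 : t * L * (d * `|ln x|) <= t * L * (eps / 2) by apply: ler_wpM2l => //; exact: ltW.
have f2 : t * (`|x - 1| * (`|ln x| + 2 / x) + 1) <= t * (L * (eps / 2)).
  by apply: ler_wpM2l => //; exact: ltW.
have -> : t * (x - 1) * Hx = t * (x - 1) * L - - (t * (x - 1)) * (Hx - L) by ring.
rewrite -/L in hHx; lra.
Qed.

End WindowLowerBound.

Section RateFunction.
Context {R : realType}.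
Implicit Types (x y c : R).

Lemma rateIE x : 0 < x -> rateI x = x * ln x - x + 1.
Proof. by move=> x0; rewrite /rateI gt_eqF. Qed.

Lemma rateI0 : rateI (0 : R) = 1.
Proof. by rewrite /rateI eqxx subr0 add0r. Qed.

Lemma rateI1 : rateI (1 : R) = 0.
Proof. by rewrite rateIE // ln1 mulr0 sub0r addNr. Qed.

Lemma rateI_ge0 x : 0 <= x -> 0 <= rateI x.
Proof.
rewrite le_eqVlt => /orP[/eqP <-|x0]; first by rewrite rateI0.
have xV : 0 < x^-1 by rewrite invr_gt0.
have := ln_le_subr1 _ xV; rewrite lnV ?posrE // => h.
have := ler_wpM2l (ltW x0) h; rewrite mulrBr mulfV ?gt_eqF // rateIE //; lra.
Qed.

Lemma rateI_le1 x : 0 < x <= 1 -> rateI x <= 1.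
Proof.
move=> /andP[x0 x1]; rewrite rateIE //.
have : x * ln x <= 0 by rewrite pmulr_rle0 // ln_le0.
lra.
Qed.

(* Yields the continuity of [rateI] at [0] from the right. *)
Lemma rateI_ge_sqrt y : 0 < y -> 1 - y - 2 * Num.sqrt y <= rateI y.
Proof.
move=> y0; rewrite rateIE //; set v := Num.sqrt y.
have v0 : 0 < v by rewrite sqrtr_gt0.
have yv : y = v ^+ 2 by rewrite sqr_sqrtr // ltW.
have lv : - v^-1 <= ln v.
  have vV : 0 < v^-1 by rewrite invr_gt0.
  by have := ln_le_subr1 _ vV; rewrite lnV ?posrE //; lra.
have e : y * ln y = 2 * (v * v * ln v) by rewrite yv lnXn // mulr2n; ring.
have := ler_wpM2l (ltW (mulr_gt0 v0 v0)) lv.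
rewrite mulrN mulfK ?gt_eqF // => h.
lra.
Qed.

Lemma rateI_gt_near0 c : c < 1 -> exists2 r : R, 0 < r & forall y, 0 <= y < r -> c < rateI y.
Proof.
move=> c1; set m := Num.min ((1 - c) / 4) 1.
have m0 : 0 < m by rewrite lt_min; apply/andP; split; lra.
have m1 : m <= 1 by rewrite ge_min lexx orbT.
have mc : m <= (1 - c) / 4 by rewrite ge_min lexx.
exists (m ^+ 2); first exact: exprn_gt0.
move=> y /andP[]; rewrite le_eqVlt => /orP[/eqP <- _|y0 ym]; first by rewrite rateI0.
have sm : Num.sqrt y < m by rewrite -[m]gtr0_norm // -sqrtr_sqr ltr_sqrt ?exprn_gt0.
have : y < m by apply: lt_le_trans ym _; rewrite expr2 ger_pMl.
have := rateI_ge_sqrt _ y0; have := sqrtr_ge0 y; lra.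
Qed.

Lemma rateI_gt_near x c : 0 < x -> c < rateI x ->
  exists2 r : R, 0 < r & forall y, `|x - y| < r -> c < rateI y.
Proof.
move=> x0 cx.
have f_cont : (fun y => y * ln y - y + 1) y @[y --> x] --> x * ln x - x + 1.
  apply: cvgD; last exact: cvg_cst.
  by apply: cvgB; [apply: cvgM; [exact: cvg_id|exact: continuous_ln]|exact: cvg_id].
rewrite rateIE // in cx.
have : \forall y \near x, c < y * ln y - y + 1 /\ 0 < y.
  by near=> y; split; near: y; [exact: (cvgr_gt _ f_cont)|exact: (cvgr_gt _ cvg_id)].
move=> /nbhs_ballP[r /= r0 hr]; exists r => // y /hr[cy y0].
by rewrite rateIE.
Unshelve. all: by end_near.
Qed.

Lemma closed_rateI_sublevel c : closed [set x : R | 0 <= x /\ rateI x <= c].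
Proof.
move=> x xcl.
have x0 : 0 <= x by apply: closed_ge; apply: closureS xcl => y [].
split => //; rewrite leNgt; apply/negP => cx.
suff [r r0 hr] : exists2 r : R, 0 < r & forall y, 0 <= y -> `|x - y| < r -> c < rateI y.
  have [y [[y0 yc] /= xy]] := xcl (ball x r) (nbhsx_ballx x r r0).
  by have := hr y y0 xy; lra.
move: x0 cx; rewrite le_eqVlt => /orP[/eqP <-|x0 cx].
  rewrite rateI0 => c1; have [r r0 hr] := rateI_gt_near0 _ c1.
  by exists r => // y y0; rewrite sub0r normrN ger0_norm // => yr; apply: hr; rewrite y0.
by have [r r0 hr] := rateI_gt_near _ _ x0 cx; exists r => // y _; exact: hr.
Qed.

End RateFunction.

Section Asymptotics.
Context {R : realType} (n : R -> nat).
Hypothesis n_pos : forall t : R, (0 < n t)%N.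
Hypothesis ratio0 : (fun t : R => t / (n t)%:R) @ +oo%R --> (0 : R).

Local Notation L t := (ln ((n t)%:R / t)).

Lemma eventually_regime (K : R) :
  \forall t \near +oo%R, [/\ 1 <= t, t <= (n t)%:R & K <= L t].
Proof.
have eK : 0 < expR (- `|K|) :> R by apply: expR_gt0.
near=> t.
have t1 : 1 <= t by near: t; apply: nbhs_pinfty_ge; exact: num_real.
have ht : `|t / (n t)%:R| < expR (- `|K|) by near: t; exact: cvgr0_norm_lt.
have n0 : 0 < (n t)%:R :> R by rewrite ltr0n.
have q0 : 0 < t / (n t)%:R by rewrite divr_gt0 //; lra.
rewrite gtr0_norm // in ht; split => //.
  have : t / (n t)%:R <= 1 by apply: ltW (lt_le_trans ht _); rewrite expR_le1 oppr_le0.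
  by rewrite ler_pdivrMr // mul1r.
rewrite -invf_div lnV ?posrE // lerNr.
have : ln (t / (n t)%:R) < - `|K| by rewrite -ltr_expR lnK ?posrE.
have := ler_norm K; lra.
Unshelve. all: by end_near.
Qed.

Lemma eventually_le_mul_ln_ratio (a b : R) : 0 < b -> \forall t \near +oo%R, a <= b * L t.
Proof.
move=> b0; apply: filterS (eventually_regime (a / b)) => t [_ _].
by rewrite ler_pdivrMr // mulrC.
Qed.

Lemma law_le_lower_part (F : set R) (M : R) : closed F -> 0 < M ->
  (forall x, F x -> 0 <= x -> M <= rateI x) ->
  \forall t \near +oo%R,
    law_scaledK t (t * L t) (n t) (F `&` ([set u | 0 <= u] `&` [set u | u <= 1]))
      <= expR (- (t * L t * M)).
Proof.
set Fl := F `&` _ => cF M0 hM.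
have cFl : closed Fl by apply: closedI => //; apply: closedI; [exact: closed_ge|exact: closed_le].
have hL := eventually_regime 1.
have law0 : (forall u, 0 < u -> ~ Fl u) ->
    \forall t \near +oo%R, law_scaledK t (t * L t) (n t) Fl <= expR (- (t * L t * M)).
  move=> Fl0; apply: filterS hL => t [t1 _ L1].
  by rewrite law_eq0 ?expR_ge0 // mulr_gt0 //; lra.
have [Fln|Fl0] := pselect (Fl !=set0); last first.
  by apply: law0 => u _ Flu; apply: Fl0; exists u.
have ubFl : has_ubound Fl by exists 1 => u [_ [_ /= ?]].
have [Fy [/= y0 y1]] := closed_sup_mem _ cFl Fln ubFl.
have uy : forall u, Fl u -> u <= sup Fl by move=> u Flu; exact: sup_upper_bound.
have y1' : sup Fl < 1.
  rewrite lt_neqAle y1 andbT; apply/negP => /eqP e.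
  by have := hM _ Fy y0; rewrite e rateI1; lra.
move: y0; rewrite le_eqVlt => /orP[/eqP e|y0].
  by apply: law0 => u u0 /uy; rewrite -e; lra.
apply: filterS hL => t [t1 tn L1].
have L0 : 0 < L t by lra.
apply: le_trans (law_le_lower_tail _ _ _ _ (n_pos t) t1 tn L0 _ uy) _; first by rewrite y0.
rewrite ler_expR lerN2; apply: ler_wpM2l; last exact: hM (ltW y0).
by rewrite mulr_ge0 //; lra.
Qed.

Lemma law_le_upper_part (F : set R) (M eps : R) : closed F -> 0 < M -> 0 < eps ->
  (forall x, F x -> 0 <= x -> M <= rateI x) ->
  \forall t \near +oo%R,
    law_scaledK t (t * L t) (n t) (F `&` [set u | 1 <= u]) <= expR (t * L t * (eps / 2 - M)).
Proof.
set Fu := F `&` _ => cF M0 e0 hM.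
have cFu : closed Fu by apply: closedI => //; exact: closed_ge.
have [Fun|Fu0] := pselect (Fu !=set0); last first.
  apply: filterS (eventually_regime 1) => t [t1 _ L1].
  rewrite law_eq0 ?expR_ge0 //; first by rewrite mulr_gt0 //; lra.
  by move=> u _ Fuu; apply: Fu0; exists u.
have lbFu : has_lbound Fu by exists 1 => u [_ /= ?].
have [Fy /= y1] := closed_inf_mem _ cFu Fun lbFu.
have uy : forall u, Fu u -> inf Fu <= u by move=> u Fuu; exact: ge_inf.
have y1' : 1 < inf Fu.
  rewrite lt_neqAle y1 andbT; apply/negP => /eqP e.
  by have := hM _ Fy (le_trans ler01 y1); rewrite -e rateI1; lra.
have IM := hM _ Fy (le_trans ler01 y1).
apply: filterS (eventually_regime (4 * (inf Fu - 1) / eps + 1)) => t [t1 tn LK].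
have K0 : 0 <= 4 * (inf Fu - 1) / eps by rewrite divr_ge0 //; lra.
have L0 : 0 < L t by lra.
apply: le_trans (law_le_upper_tail _ _ _ _ (n_pos t) t1 tn L0 y1' uy) _.
have s0 : 0 <= t * L t by rewrite mulr_ge0 //; lra.
have h1 : t * L t * M <= t * L t * rateI (inf Fu) by rewrite ler_wpM2l.
have h2 : 4 * (inf Fu - 1) <= L t * eps by rewrite -ler_pdivrMr //; lra.
have h3 : 2 * t * (inf Fu - 1) <= t * L t * (eps / 2).
  have : t * (4 * (inf Fu - 1)) <= t * (L t * eps) by rewrite ler_wpM2l //; lra.
  have -> : t * L t * (eps / 2) = t * (L t * eps) / 2 by ring.
  lra.
rewrite ler_expR; lra.
Qed.

Lemma ldp_upper_bound (F : set R) : closed F ->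
  forall M : R, (forall x, F x -> 0 <= x -> M <= rateI x) ->
  forall eps : R, 0 < eps ->
  \forall t \near +oo%R, law_scaledK t (t * L t) (n t) F <= expR (t * L t * (eps - M)).
Proof.
move=> cF M hM eps e0.
have [M0|M0] := leP M 0.
  apply: filterS (eventually_regime 1) => t [t1 _ L1].
  apply: le_trans (law_le1 _ _ _ _ (n_pos t) _) _; first lra.
  have : 0 <= t * L t * (eps - M) by rewrite !mulr_ge0 //; lra.
  by have := expR_ge1Dx (t * L t * (eps - M)); lra.
near=> t.
have [t1 _ LK] : [/\ 1 <= t, t <= (n t)%:R & 2 / eps <= L t].
  by near: t; exact: eventually_regime.
have hlo : law_scaledK t (t * L t) (n t) (F `&` ([set u | 0 <= u] `&` [set u | u <= 1]))
    <= expR (- (t * L t * M)) by near: t; exact: law_le_lower_part.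
have hup : law_scaledK t (t * L t) (n t) (F `&` [set u | 1 <= u])
    <= expR (t * L t * (eps / 2 - M)) by near: t; exact: law_le_upper_part.
have K0 : 0 < 2 / eps by rewrite divr_gt0.
have L0 : 0 < L t by lra.
have s0 : 0 < t * L t by rewrite mulr_gt0 //; lra.
apply: le_trans (law_le_cover _ _ _ _ (F `&` ([set u | 0 <= u] `&` [set u | u <= 1]))
  (F `&` [set u | 1 <= u]) _ s0 _) _; first lra.
  move=> u u0 Fu; have [u1|u1] := lerP u 1.
    by left; split => //; split => //; exact: ltW.
  by right; split => //; exact: ltW.
(* [exp(s eps / 2) >= e >= 2] absorbs the factor 2 from the two parts. *)
have h2 : 2 <= expR (t * L t * (eps / 2)).
  apply: le_trans expR1_ge2 _; rewrite ler_expR.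
  have : 2 <= L t * eps by rewrite -ler_pdivrMr.
  have Le0 : 0 <= L t * eps by rewrite mulr_ge0 // ltW.
  have : L t * eps <= t * (L t * eps) by rewrite ler_peMl.
  have -> : t * L t * (eps / 2) = t * (L t * eps) / 2 by ring.
  lra.
have e : t * L t * (eps - M) = t * L t * (eps / 2) + t * L t * (eps / 2 - M) by field.
rewrite e expRD.
have : expR (- (t * L t * M)) <= expR (t * L t * (eps / 2 - M)).
  have : 0 <= t * L t * (eps / 2) by apply: mulr_ge0; [exact: ltW|lra].
  by rewrite ler_expR; lra.
have := expR_gt0 (t * L t * (eps / 2 - M)).
have : 2 * expR (t * L t * (eps / 2 - M))
    <= expR (t * L t * (eps / 2)) * expR (t * L t * (eps / 2 - M)).
  by rewrite ler_wpM2r ?expR_ge0.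
lra.
Unshelve. all: by end_near.
Qed.

Lemma ldp_lower_bound_pos (G : set R) (x eps r : R) : 0 < x -> 0 < eps -> 0 < r ->
  (forall y, `|x - y| < r -> G y) ->
  \forall t \near +oo%R,
    expR (- (t * L t * (rateI x + eps))) <= law_scaledK t (t * L t) (n t) G.
Proof.
move=> x0 e0 r0 hG.
have lx1 : 0 < `|ln x| + 1 by rewrite ltr_wpDl.
set q := Num.min (2^-1) (Num.min (r / (2 * x)) (eps / (4 * x * (`|ln x| + 1)))).
have q0 : 0 < q by rewrite !lt_min !divr_gt0 ?mulr_gt0 //; lra.
have q2 : q <= 2^-1 by rewrite ge_min lexx.
have qr : 2 * x * q <= r.
  rewrite -ler_pdivlMl ?mulr_gt0 // mulrC.
  by apply: le_trans (_ : q <= r / (2 * x)) _; rewrite ?ge_min ?lexx ?orbT.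
have qe : 2 * x * q * `|ln x| <= eps / 2.
  have : q <= eps / (4 * x * (`|ln x| + 1)) by rewrite !ge_min lexx !orbT.
  rewrite ler_pdivlMr ?mulr_gt0 // => h.
  have : 0 <= 2 * x * q by rewrite mulr_ge0 ?mulr_ge0 ?ltW.
  have : 2 * x * q * (`|ln x| + 1) <= eps / 2 by lra.
  by have := normr_ge0 (ln x); nra.
have WG : [set u | x - 2 * x * q < u < x + 2 * x * q] `<=` G.
  by move=> u /andP[? ?]; apply: hG; rewrite ltr_norml; apply/andP; split; lra.
have c0 : 0 < x * q ^+ 2 / (1 + q) by rewrite divr_gt0 ?mulr_gt0 ?exprn_gt0 //; lra.
have e2 : 0 < eps / 2 by rewrite divr_gt0.
near=> t.
have [t1 tn L1] : [/\ 1 <= t, t <= (n t)%:R & 1 <= L t] by near: t; exact: eventually_regime.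
apply: law_ge_window (n_pos t) t1 tn _ x0 q0 q2 WG qe _ _ _; first lra.
- by near: t; exact: eventually_le_mul_ln_ratio.
- by near: t; exact: eventually_le_mul_ln_ratio.
- by rewrite [L t * _]mulrC; near: t; exact: eventually_le_mul_ln_ratio.
Unshelve. all: by end_near.
Qed.

Lemma ldp_lower_bound (G : set R) : open G ->
  forall x : R, G x -> 0 <= x -> forall eps : R, 0 < eps ->
  \forall t \near +oo%R,
    expR (- (t * L t * (rateI x + eps))) <= law_scaledK t (t * L t) (n t) G.
Proof.
move=> oG x Gx x0 eps e0.
have /nbhs_ballP[r /= r0 hr] : nbhs x G by exact: oG.
have hG : forall y, `|x - y| < r -> G y by move=> y; exact: hr.
move: x0; rewrite le_eqVlt => /orP[/eqP x0|x0]; last first.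
  exact: (ldp_lower_bound_pos _ _ _ _ x0 e0 r0 hG).
(* At [x = 0], move to a nearby [x' > 0] with [rateI x' <= 1 = rateI 0]. *)
subst x; set x' := Num.min (r / 2) 2^-1.
have x'0 : 0 < x' by rewrite lt_min divr_gt0 //=; lra.
have x'r : x' <= r / 2 by rewrite ge_min lexx.
have x'1 : x' <= 1 by rewrite ge_min; apply/orP; right; lra.
have hG' : forall y, `|x' - y| < r / 2 -> G y.
  move=> y hy; apply: hG; rewrite sub0r normrN.
  by have := ler_normD (y - x') x'; rewrite subrK (gtr0_norm x'0) distrC; lra.
have I' : rateI x' <= rateI 0 by rewrite rateI0 rateI_le1 // x'0.
have r2 : 0 < r / 2 by rewrite divr_gt0.
have := ldp_lower_bound_pos _ _ _ _ x'0 e0 r2 hG'.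
apply: filterS2 (eventually_regime 1) => t [t1 _ L1].
apply: le_trans; rewrite ler_expR lerN2; apply: ler_wpM2l; last by rewrite lerD2r.
by rewrite mulr_ge0 //; lra.
Qed.

End Asymptotics.

Theorem theorem4p5 (R : realType) (n : R -> nat)
    (n_pos : forall theta : R, (0 < n theta)%N)
    (n_infty : (fun theta : R => (n theta)%:R : R) @ +oo%R --> +oo%R)
    (ratio0 : (fun theta : R => theta / (n theta)%:R) @ +oo%R --> (0 : R)) :
  LDP_on_nonneg
    (fun theta : R => law_scaledK theta (theta * ln ((n theta)%:R / theta)) (n theta))
    (fun theta : R => theta * ln ((n theta)%:R / theta))
    (@rateI R).
Proof.
split.
- exact: rateI_ge0.
- exact: closed_rateI_sublevel.
- exact: ldp_upper_bound.
- exact: ldp_lower_bound.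
Qed.
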